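(* Let $G$ be a $B_2$-EPG graph given with a representation, let $a$ be a row, and let $Y$ be a nonempty set of vertices whose indices all contain $a$. Suppose the projection graph of $Y$ on $a$ is a clique. Then there is a proper typed interval $t$ on row $a$ such that: (1) every vertex of $Y$ contains $t$; (2) for every vertex $u$ whose index is $\{a\}$ or $\{a,c\}$ where the row $c$ is not in the index of any vertex of $Y$, $u$ is adjacent to every vertex of $Y$ if and only if $u$ intersects $t$.
   Context: A graph $G$ is a $B_k$-EPG graph if each vertex $u$ can be assigned a path $P_u$ in the planar orthogonal grid with at most $k$ bends such that $uv\in E(G)$ iff $P_u$ and $P_v$ share at least one grid edge (a representation); for $B_2$-EPG graphs one assumes w.l.o.g. every path has exactly two bends. A vertex $u$ intersects a row if $P_u$ contains a grid edge of that row; the index of $u$ is the set of rows it intersects. If $a$ is in the index of $u$, $P_u^a$ is the segment of row $a$ between the two points of row $a$ where $P_u$ stops or bends. Types: $\emptyset$, $\mathsf d$, $\mathsf u$. A typed interval on row $a$ is $[x\alpha, y\beta]$ with $\alpha\le\beta$ points of row $a$ and $x,y$ types; it is proper if $\alpha\neq\beta$, or $\alpha=\beta$, $x=y$ and $x\in\{\mathsf u,\mathsf d\}$. For typed intervals $t=[x\alpha,y\beta]$, $t'=[x'\alpha',y'\beta']$ on row $a$ and an endpoint $z\gamma\in\{x'\alpha',y'\beta'\}$ of $t'$, $t$ is coherent with $z\gamma$ if (i) $\gamma\in(\alpha,\beta)$ (open interval), or (ii) $z=\emptyset$ and $[\alpha,\beta]$ contains the grid edge of $[\alpha',\beta']$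 incident to $\gamma$, or (iii) $z\neq\emptyset$ and $z\gamma\in\{x\alpha,y\beta\}$. $t$ contains $t'$ if $[\alpha',\beta']\subseteq[\alpha,\beta]$ and $t$ is coherent with both endpoints of $t'$. $t$ intersects $t'$ if $[\alpha,\beta]\cap[\alpha',\beta']$ contains a grid edge, or $t$ is coherent with an endpoint of $t'$, or $t'$ is coherent with an endpoint of $t$. The t-projection of $u$ on $a$ is $[x\alpha,y\beta]$ where $\alpha,\beta$ are the endpoints of $P_u^a$ and the type of an endpoint $\gamma$ is $\emptyset$ if $P_u$ ends at $\gamma$, $\mathsf d$ if $P_u$ bends downwards at $\gamma$, $\mathsf u$ if upwards. A vertex contains (intersects) a typed interval $t$ on $a$ if its t-projection on $a$ contains (intersects) $t$. The projection graph of a set $Y$ of vertices whose indices contain $a$ is the graph on $Y$ in which $u,v$ are adjacent iff their t-projections on $a$ intersect. *)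

From mathcomp Require Import all_boot.
From Stdlib Require Import ZArith.

Set Implicit Arguments.
Unset Strict Implicit.
Unset Printing Implicit Defensive.

(* Grid points (x, y) in Z x Z; rows are the horizontal lines y = a.
   "Up" means increasing y. *)
Definition gpoint := (Z * Z)%type.

(* Unit grid edges: HE x y joins (x,y)-(x+1,y); VE x y joins (x,y)-(x,y+1). *)
Inductive gedge := HE (x y : Z) | VE (x y : Z).

(* A path with exactly two bends: corner points q0 q1 q2 q3 (q0, q3 the ends,
   q1, q2 the bends). *)
Record path2 := Path2 { q0 : gpoint; q1 : gpoint; q2 : gpoint; q3 : gpoint }.

Definition seg_ok (p q : gpoint) : Prop :=
  p <> q /\ (fst p = fst q \/ snd p = snd q).

Definition seg_horiz (p q : gpoint) : Prop := snd p = snd q.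

Definition two_bends (P : path2) : Prop :=
  seg_ok (q0 P) (q1 P) /\ seg_ok (q1 P) (q2 P) /\ seg_ok (q2 P) (q3 P) /\
  (seg_horiz (q0 P) (q1 P) <-> ~ seg_horiz (q1 P) (q2 P)) /\
  (seg_horiz (q1 P) (q2 P) <-> ~ seg_horiz (q2 P) (q3 P)).

Definition seg_has (p q : gpoint) (e : gedge) : Prop :=
  match e with
  | HE x y => snd p = y /\ snd q = y /\
              (Z.min (fst p) (fst q) <= x)%Z /\ (x + 1 <= Z.max (fst p) (fst q))%Z
  | VE x y => fst p = x /\ fst q = x /\
              (Z.min (snd p) (snd q) <= y)%Z /\ (y + 1 <= Z.max (snd p) (snd q))%Z
  end.

Definition path_has (P : path2) (e : gedge) : Prop :=
  seg_has (q0 P) (q1 P) e \/ seg_has (q1 P) (q2 P) e \/ seg_has (q2 P) (q3 P) e.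

Definition adjacent (V : Type) (R : V -> path2) (u v : V) : Prop :=
  u <> v /\ exists e, path_has (R u) e /\ path_has (R v) e.

Definition in_index (P : path2) (a : Z) : Prop := exists x, path_has P (HE x a).

Inductive ttype := Tnone | Td | Tu.

(* [xl al, xr ar] *)
Record tint := TI { xl : ttype; al : Z; xr : ttype; ar : Z }.

Definition ti_wf (t : tint) : Prop := (al t <= ar t)%Z.

Definition ti_proper (t : tint) : Prop :=
  al t <> ar t \/ (al t = ar t /\ xl t = xr t /\ xl t <> Tnone).

(* t coherent with an endpoint z gamma of another interval, where [k,k+1]
   (if any) is the grid edge of that other interval incident to gamma *)
Definition coh_pt (t : tint) (z : ttype) (g : Z) (k : option Z) : Prop :=
  (al t < g < ar t)%Z \/
  (z = Tnone /\ exists k0, k = Some k0 /\ (al t <= k0)%Z /\ (k0 + 1 <= ar t)%Z) \/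
  (z <> Tnone /\ ((z = xl t /\ g = al t) \/ (z = xr t /\ g = ar t))).

Definition left_edge (t' : tint) : option Z :=
  if (al t' <? ar t')%Z then Some (al t') else None.
Definition right_edge (t' : tint) : option Z :=
  if (al t' <? ar t')%Z then Some (ar t' - 1)%Z else None.

Definition coh_left (t t' : tint) : Prop := coh_pt t (xl t') (al t') (left_edge t').
Definition coh_right (t t' : tint) : Prop := coh_pt t (xr t') (ar t') (right_edge t').

Definition ti_contains (t t' : tint) : Prop :=
  (al t <= al t')%Z /\ (ar t' <= ar t)%Z /\ coh_left t t' /\ coh_right t t'.

Definition ti_intersects (t t' : tint) : Prop :=
  (exists k, (al t <= k)%Z /\ (k + 1 <= ar t)%Z /\ (al t' <= k)%Z /\ (k + 1 <= ar t')%Z)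
  \/ coh_left t t' \/ coh_right t t' \/ coh_left t' t \/ coh_right t' t.

(* type of a bend at point b whose vertical segment goes to point o *)
Definition vdir (b o : gpoint) : ttype := if (snd b <? snd o)%Z then Tu else Td.

Definition mk_ti (x1 : ttype) (p1 : Z) (x2 : ttype) (p2 : Z) : tint :=
  if (p1 <=? p2)%Z then TI x1 p1 x2 p2 else TI x2 p2 x1 p1.

Definition on_row (p q : gpoint) (a : Z) : bool := ((snd p =? a) && (snd q =? a))%Z.

(* t-projection of a (two-bend) path P on row a; meaningful when a is in the
   index of P (then exactly one of the three segments is horizontal on row a). *)
Definition tproj (P : path2) (a : Z) : tint :=
  if on_row (q0 P) (q1 P) a then
    mk_ti Tnone (fst (q0 P)) (vdir (q1 P) (q2 P)) (fst (q1 P))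
  else if on_row (q1 P) (q2 P) a then
    mk_ti (vdir (q1 P) (q0 P)) (fst (q1 P)) (vdir (q2 P) (q3 P)) (fst (q2 P))
  else
    mk_ti (vdir (q2 P) (q1 P)) (fst (q2 P)) Tnone (fst (q3 P)).

(* Two-bend paths that both meet row [a], and have no other row in common, share a
   grid edge exactly when their t-projections on [a] intersect: a shared edge either
   lies on row [a] or is a vertical edge leaving a common bend point in the same
   direction.
   Pairwise intersecting t-projections all contain the typed interval [t] running
   from the largest left end [L] to the smallest right end [R] (pairwise intersection
   gives [L <= R]); the end of [t] at [L] is typed only when all projections starting
   at [L] bend there in one common direction, and symmetrically at [R].  A typed
   interval with distinct ends then meets [t] iff it meets every projection: lying
   left of [L], it can only meet the projections starting at [L] through a bend at [L]
   shared with all of them, which is the typed end of [t]. *)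

From mathcomp Require Import all_boot.
From Stdlib Require Import ZArith Lia Classical_Prop.

Set Implicit Arguments.
Unset Strict Implicit.
Unset Printing Implicit Defensive.

Open Scope Z_scope.

Definition ti_endpoint (t : tint) (z : ttype) (g : Z) : Prop :=
  (z = xl t /\ g = al t) \/ (z = xr t /\ g = ar t).

Definition ti_share_edge (s t : tint) : Prop :=
  exists k, al s <= k /\ k + 1 <= ar s /\ al t <= k /\ k + 1 <= ar t.

Definition ti_share_bend (s t : tint) : Prop :=
  exists z g, z <> Tnone /\ ti_endpoint s z g /\ ti_endpoint t z g.

Lemma left_edge_Some t k : left_edge t = Some k -> al t < ar t /\ k = al t.
Proof. by rewrite /left_edge; case: Z.ltb_spec => // ? [<-]. Qed.

Lemma right_edge_Some t k : right_edge t = Some k -> al t < ar t /\ k = ar t - 1.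
Proof. by rewrite /right_edge; case: Z.ltb_spec => // ? [<-]. Qed.

Lemma left_edge_nondeg t : al t < ar t -> left_edge t = Some (al t).
Proof. by rewrite /left_edge => /Z.ltb_lt ->. Qed.

Lemma right_edge_nondeg t : al t < ar t -> right_edge t = Some (ar t - 1).
Proof. by rewrite /right_edge => /Z.ltb_lt ->. Qed.

Lemma coh_pt_typed t z g k : coh_pt t z g k -> z <> Tnone ->
  al t < g < ar t \/ ti_endpoint t z g.
Proof. by case=> [?|[[]|[]]]; [left | | right]. Qed.

Lemma ti_intersectsE s t : al s < ar s -> ti_wf t ->
  ti_intersects s t <->
  ti_share_edge s t \/ ti_share_bend s t \/ (al t = ar t /\ al s < al t < ar s).
Proof.
  rewrite /ti_wf => hs ht; split.
  - case=> [edge|[cl|[cr|[cl'|cr']]]]; first by left.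
    + case: cl => [?|[[_ [k [/left_edge_Some [? ->] ?]]]|[? ?]]].
      * have [?|?] : al t = ar t \/ al t < ar t by lia.
          by right; right; lia.
        by left; exists (al t); lia.
      * by left; exists (al t); lia.
      * by right; left; exists (xl t), (al t); do 2!split=> //; left.
    + case: cr => [?|[[_ [k [/right_edge_Some [? ->] ?]]]|[? ?]]].
      * have [?|?] : al t = ar t \/ al t < ar t by lia.
          by right; right; lia.
        by left; exists (ar t - 1); lia.
      * by left; exists (ar t - 1); lia.
      * by right; left; exists (xr t), (ar t); do 2!split=> //; right.
    + case: cl' => [?|[[_ [k [/left_edge_Some [? ->] ?]]]|[? ?]]].
      * by left; exists (al s); lia.
      * by left; exists (al s); lia.
      * by right; left; exists (xl s), (al s); do 2!split=> //; left.
    + case: cr' => [?|[[_ [k [/right_edge_Some [? ->] ?]]]|[? ?]]].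
      * by left; exists (ar s - 1); lia.
      * by left; exists (ar s - 1); lia.
      * by right; left; exists (xr s), (ar s); do 2!split=> //; right.
  - case=> [edge|[[z [g [hz [es [[ez eg]|[ez eg]]]]]]|[_ ?]]]; first by left.
    + by right; left; right; right; rewrite -ez -eg.
    + by right; right; left; right; right; rewrite -ez -eg.
    + by right; left; left; lia.
Qed.

Lemma ti_intersects_overlap s t : al s < ar s -> ti_wf t ->
  al s < ar t -> al t < ar s -> ti_intersects s t.
Proof.
  move=> hs ht ? ?; apply/(ti_intersectsE hs ht).
  have [?|?] : al t = ar t \/ al t < ar t by rewrite /ti_wf in ht; lia.
    by right; right; lia.
  by left; exists (Z.max (al s) (al t)); lia.
Qed.

Lemma ti_intersects_touch s t : al s < ar s -> al t < ar t ->
  ti_intersects s t -> ar s <= al t ->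
  ar s = al t /\ xr s = xl t /\ xr s <> Tnone.
Proof.
  move=> hs ht /(ti_intersectsE hs (Z.lt_le_incl _ _ ht)).
  case=> [[k ?]|[[z [g [hz [es et]]]]|[? ?]]] ?; try lia.
  case: es et => [[? ?]|[? ?]] [[? ?]|[? ?]]; subst; try lia.
  by do 2!split=> //; congruence.
Qed.

Lemma ti_intersectsC s t : al s < ar s -> al t < ar t ->
  ti_intersects s t -> ti_intersects t s.
Proof.
  move=> hs ht /(ti_intersectsE hs (Z.lt_le_incl _ _ ht)) hst.
  apply/(ti_intersectsE ht (Z.lt_le_incl _ _ hs)).
  case: hst => [[k ?]|[[z [g [? [? ?]]]]|[? ?]]].
  - by left; exists k; lia.
  - by right; left; exists z, g.
  - lia.
Qed.

Lemma ti_intersects_contains s T t : al s < ar s -> al T < ar T -> ti_wf t ->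
  ti_contains T t -> ti_intersects s t -> ti_intersects s T.
Proof.
  move=> hs hT ht [? [? [cl cr]]] /(ti_intersectsE hs ht).
  case=> [[k ?]|[[z [g [hz [es et]]]]|[? ?]]].
  - by apply/(ti_intersectsE hs (Z.lt_le_incl _ _ hT)); left; exists k; lia.
  - have [?|eT] : al T < g < ar T \/ ti_endpoint T z g.
      by case: et => [[-> ->]|[-> ->]] in hz *;
        [exact: coh_pt_typed cl hz | exact: coh_pt_typed cr hz].
    + by apply: ti_intersects_overlap => //; rewrite /ti_wf;
        case: es => [[_ ?]|[_ ?]]; lia.
    + apply/(ti_intersectsE hs (Z.lt_le_incl _ _ hT)).
      by right; left; exists z, g.
  - by apply: ti_intersects_overlap => //; rewrite /ti_wf; lia.
Qed.

Lemma ti_contains_of_ends T t : al T < ar T -> ti_wf t -> ti_proper t ->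
  al T <= al t -> ar t <= ar T ->
  (al t = al T -> xl t <> Tnone -> xl T = xl t) ->
  (ar t = ar T -> xr t <> Tnone -> xr T = xr t) ->
  ti_contains T t.
Proof.
  rewrite /ti_wf => hT ht hp ? ? el er; do 2!split=> //; split.
  - have [inside|[e|e]] :
        al T < al t < ar T \/ al T = al t \/ al t = ar T by lia.
    + by left.
    + have [hx|hx] : xl t = Tnone \/ xl t <> Tnone by case: (xl t); [left|right|right].
      * have nd : al t < ar t by case: hp => [|[_ []]]; [lia|rewrite hx].
        by right; left; split=> //; exists (al t); split; [exact: left_edge_nondeg | lia].
      * by right; right; split=> //; left; rewrite el.
    + case: hp => [|[? [exlr hn]]]; first lia.
      by right; right; split=> //; right; rewrite er; [split=> //; lia | lia | rewrite -exlr].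
  - have [inside|[e|e]] :
        al T < ar t < ar T \/ ar t = ar T \/ al T = ar t by lia.
    + by left.
    + have [hx|hx] : xr t = Tnone \/ xr t <> Tnone by case: (xr t); [left|right|right].
      * have nd : al t < ar t by case: hp => [|[_ [exlr]]]; [lia|rewrite exlr hx].
        by right; left; split=> //; exists (ar t - 1); split; [exact: right_edge_nondeg | lia].
      * by right; right; split=> //; right; rewrite er.
    + case: hp => [|[? [exlr hn]]]; first lia.
      by right; right; split;
        [rewrite -exlr | left; rewrite el; [split; [rewrite exlr|lia] | lia | ]].
Qed.

Lemma seq_argmax (A : eqType) (f : A -> Z) (x : A) (s : seq A) :
  exists2 y, y \in x :: s & forall y', y' \in x :: s -> f y' <= f y.
Proof.
  elim: s x => [|x' s IH] x.
    by exists x => [|y']; rewrite inE // => /eqP ->; lia.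
  have [y hy hmax] := IH x'.
  have [le|gt] := Z.le_gt_cases (f x) (f y).
  - exists y => [|y']; first by rewrite inE hy orbT.
    by rewrite inE => /orP [/eqP ->|/hmax]; lia.
  - exists x => [|y']; first by rewrite inE eqxx.
    by rewrite inE => /orP [/eqP ->|/hmax]; lia.
Qed.

Lemma finset_argmax (A : finType) (Y : {set A}) (f : A -> Z) : Y != set0 ->
  exists2 y, y \in Y & forall y', y' \in Y -> f y' <= f y.
Proof.
  case/set0Pn=> x hx; have [y hy hmax] := seq_argmax f x (enum Y).
  exists y; first by move: hy; rewrite inE mem_enum => /orP [/eqP ->|].
  by move=> y' hy'; apply: hmax; rewrite inE mem_enum hy' orbT.
Qed.

Lemma common_type_exists (A : Type) (P : A -> Prop) (f : A -> ttype) :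
  exists x, (forall y, P y -> x <> Tnone -> f y = x) /\
    (forall z, z <> Tnone -> (exists y, P y) -> (forall y, P y -> f y = z) -> x = z).
Proof.
  case: (classic (exists z, z <> Tnone /\ forall y, P y -> f y = z)).
  - move=> [z [hz hf]]; exists z; split=> [y /hf //|z' _ [y hy] hf'].
    by rewrite -(hf y hy) (hf' y hy).
  - move=> none; exists Tnone; split=> // z hz _ hf.
    by case: none; exists z.
Qed.

Section CliqueCore.

Variables (A : finType) (Y : {set A}) (T : A -> tint).
Hypotheses (T_nondeg : forall y, y \in Y -> al (T y) < ar (T y))
  (T_clique : forall y y', y \in Y -> y' \in Y -> y <> y' -> ti_intersects (T y) (T y')).

Lemma clique_touch y y' : y \in Y -> y' \in Y -> ar (T y) <= al (T y') ->
  ar (T y) = al (T y') /\ xr (T y) = xl (T y') /\ xr (T y) <> Tnone.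
Proof.
  move=> hy hy' le; have ndy := T_nondeg hy; have ndy' := T_nondeg hy'.
  have ne : y <> y' by move=> e; subst y'; lia.
  exact: ti_intersects_touch (T_clique hy hy' ne) le.
Qed.

Variables (yL yR : A) (xlt xrt : ttype).
Let L := al (T yL).
Let R := ar (T yR).
(* [xlt] is the type shared by all left ends at [L] if they agree on a bend
   direction, and [Tnone] otherwise; likewise [xrt] at [R]. *)
Hypotheses (yL_in : yL \in Y) (yR_in : yR \in Y)
  (yL_max : forall y, y \in Y -> al (T y) <= L)
  (yR_min : forall y, y \in Y -> R <= ar (T y))
  (xlt_common : forall y, y \in Y /\ al (T y) = L -> xlt <> Tnone -> xl (T y) = xlt)
  (xlt_unique : forall z, z <> Tnone -> (exists y, y \in Y /\ al (T y) = L) ->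
     (forall y, y \in Y /\ al (T y) = L -> xl (T y) = z) -> xlt = z)
  (xrt_common : forall y, y \in Y /\ ar (T y) = R -> xrt <> Tnone -> xr (T y) = xrt)
  (xrt_unique : forall z, z <> Tnone -> (exists y, y \in Y /\ ar (T y) = R) ->
     (forall y, y \in Y /\ ar (T y) = R -> xr (T y) = z) -> xrt = z).

Let core := TI xlt L xrt R.

Lemma core_wf : ti_wf core.
Proof.
  rewrite /ti_wf /=; have [//|lt] := Z.le_gt_cases L R.
  by have [] := clique_touch yR_in yL_in (Z.lt_le_incl _ _ lt); lia.
Qed.

Lemma core_proper : ti_proper core.
Proof.
  have [lt|eq] : L < R \/ L = R by have := core_wf; rewrite /ti_wf /=; lia.
    by left => /=; lia.
  have [_ [eRL hn]] := clique_touch yR_in yL_in (Z.eq_le_incl _ _ (esym eq)).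
  have exl : xlt = xr (T yR).
    apply: xlt_unique => // [|y [hy ey]]; first by exists yL.
    by have [_ []] := clique_touch yR_in hy ltac:(lia).
  have exr : xrt = xr (T yR).
    apply: xrt_unique => // [|y [hy ey]]; first by exists yR.
    by have [_ [-> _]] := clique_touch hy yL_in ltac:(lia).
  by right => /=; rewrite exl exr.
Qed.

Lemma core_contained y : y \in Y -> ti_contains (T y) core.
Proof.
  move=> hy.
  exact (ti_contains_of_ends (T_nondeg hy) core_wf core_proper (yL_max hy) (yR_min hy)
    (fun e => xlt_common (conj hy (esym e))) (fun e => xrt_common (conj hy (esym e)))).
Qed.

Lemma core_intersectsP s : al s < ar s ->
  ti_intersects s core <-> forall y, y \in Y -> ti_intersects s (T y).
Proof.
  move=> hs; split=> [hst y hy|hall].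
    exact: ti_intersects_contains hs (T_nondeg hy) core_wf (core_contained hy) hst.
  have [lt1|ge1] := Z_lt_le_dec (al s) R; have [lt2|ge2] := Z_lt_le_dec L (ar s).
  - exact: ti_intersects_overlap hs core_wf lt1 lt2.
  - have touch y : y \in Y -> al (T y) = L -> ar s = L /\ xr s = xl (T y) /\ xr s <> Tnone.
      move=> hy ey; rewrite -ey.
      by apply: ti_intersects_touch (T_nondeg hy) (hall y hy) _; lia.
    have [eL [_ hn]] := touch yL yL_in erefl.
    have exl : xlt = xr s.
      apply: xlt_unique => // [|y [hy ey]]; first by exists yL.
      by have [_ [-> _]] := touch y hy ey.
    apply/(ti_intersectsE hs core_wf); right; left.
    by exists (xr s), (ar s); do 2!split=> //; [right | left; rewrite /core /= exl].
  - have touch y : y \in Y -> ar (T y) = R -> al s = R /\ xl s = xr (T y) /\ xl s <> Tnone.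
      move=> hy ey; rewrite -ey.
      have [? [? ?]] := ti_intersects_touch (T_nondeg hy) hs
        (ti_intersectsC hs (T_nondeg hy) (hall y hy)) ltac:(lia).
      by do 2!split=> //; congruence.
    have [eR [_ hn]] := touch yR yR_in erefl.
    have exr : xrt = xl s.
      apply: xrt_unique => // [|y [hy ey]]; first by exists yR.
      by have [_ [-> _]] := touch y hy ey.
    apply/(ti_intersectsE hs core_wf); right; left.
    by exists (xl s), (al s); do 2!split=> //; [left | right; rewrite /core /= exr].
  - by have := core_wf; rewrite /ti_wf /=; lia.
Qed.

End CliqueCore.

Lemma ti_clique_core (A : finType) (Y : {set A}) (T : A -> tint) :
  Y != set0 -> (forall y, y \in Y -> al (T y) < ar (T y)) ->
  (forall y y', y \in Y -> y' \in Y -> y <> y' -> ti_intersects (T y) (T y')) ->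
  exists t, ti_wf t /\ ti_proper t /\ (forall y, y \in Y -> ti_contains (T y) t) /\
    (forall s, al s < ar s ->
       (ti_intersects s t <-> forall y, y \in Y -> ti_intersects s (T y))).
Proof.
  move=> hY nd cl.
  have [yL yL_in yL_max] := finset_argmax (fun y => al (T y)) hY.
  have [yR yR_in yR_max] := finset_argmax (fun y => - ar (T y)) hY.
  have yR_min y : y \in Y -> ar (T yR) <= ar (T y) by move/yR_max => /=; lia.
  have [xlt [xlt_common xlt_unique]] :=
    common_type_exists (fun y => y \in Y /\ al (T y) = al (T yL)) (fun y => xl (T y)).
  have [xrt [xrt_common xrt_unique]] :=
    common_type_exists (fun y => y \in Y /\ ar (T y) = ar (T yR)) (fun y => xr (T y)).
  exists (TI xlt (al (T yL)) xrt (ar (T yR))); split; last split; last split.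
  - exact (core_wf nd cl yL_in yR_in).
  - exact (core_proper nd cl yL_in yR_in xlt_unique xrt_unique).
  - exact (core_contained nd cl yL_in yR_in yL_max yR_min
      xlt_common xlt_unique xrt_common xrt_unique).
  - exact (core_intersectsP nd cl yL_in yR_in yL_max yR_min
      xlt_common xlt_unique xrt_common xrt_unique).
Qed.

Lemma pair_neq (p q r s : Z) : (p, q) <> (r, s) -> p <> r \/ q <> s.
Proof.
  move=> neq; case: (Z.eq_dec p r) => [epr|]; last by left.
  by right=> eqs; apply: neq; rewrite epr eqs.
Qed.

Lemma two_bends_shape x0 y0 x1 y1 x2 y2 x3 y3 :
  two_bends (Path2 (x0, y0) (x1, y1) (x2, y2) (x3, y3)) ->
  (y1 = y0 /\ x2 = x1 /\ y3 = y2 /\ y0 <> y2 /\ x0 <> x1 /\ x1 <> x3) \/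
  (x1 = x0 /\ y2 = y1 /\ x3 = x2 /\ y0 <> y1 /\ x0 <> x2 /\ y1 <> y3).
Proof.
  rewrite /two_bends /seg_ok /seg_horiz /=.
  move=> [[/pair_neq n01 h01] [[/pair_neq n12 h12] [[/pair_neq n23 h23]]]].
  move=> [[f1 g1] [f2 g2]].
  case: (Z.eq_dec y0 y1) => e01.
  - have ny12 := f1 e01.
    have e23 : y2 = y3 by case: (Z.eq_dec y2 y3) => // /g2.
    have [nx01 ex12 nx23] : [/\ x0 <> x1, x1 = x2 & x2 <> x3].
      by split; [case: n01 | case: h12 | case: n23].
    by left; repeat split; congruence.
  - have e12 : y1 = y2 by case: (Z.eq_dec y1 y2) => // /g1.
    have ny23 := f2 e12.
    have [ex01 nx12 ex23] : [/\ x0 = x1, x1 <> x2 & x2 = x3].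
      by split; [case: h01 | case: n12 | case: h23].
    by right; repeat split; congruence.
Qed.

(* [VE x y] joins (x, y) to (x, y + 1), so it lies above row [a] iff [a <= y].
   [bend_edge z g a] is the vertical edge leaving (g, a) in direction [z]; its value
   at [Tnone] is never used. *)
Definition on_side (z : ttype) (a y : Z) : Prop :=
  match z with Tu => a <= y | Td => y < a | Tnone => False end.

Definition bend_edge (z : ttype) (g a : Z) : gedge :=
  if z is Tu then VE g a else VE g (a - 1).

(* Row [a] is the first or the last segment of a horizontal-vertical-horizontal path,
   or the middle segment of a vertical-horizontal-vertical one. *)
Ltac tproj_cases :=
  let shape := fresh in let row := fresh in
  case=> [[x0 y0] [x1 y1] [x2 y2] [x3 y3]] /two_bends_shape shape [w row];
  move: row; rewrite /tproj /on_row /mk_ti /vdir /path_has /seg_has /= => row;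
  case: shape => [[? [? [? [? [? ?]]]]] | [? [? [? [? [? ?]]]]]]; subst;
  [have [->|->] : a = y0 \/ a = y2 by lia | have -> : a = y1 by lia];
  repeat match goal with
  | |- context [if ?b then _ else _] =>
      let E := fresh "E" in case E: b;
      rewrite ?Bool.andb_true_iff ?Bool.andb_false_iff ?Z.eqb_eq ?Z.eqb_neq
        ?Z.leb_le ?Z.leb_gt ?Z.ltb_lt ?Z.ltb_ge in E
  end; cbn [al ar xl xr on_side bend_edge]; try lia.

Section TProjGeometry.

Variables (P : path2) (a : Z).
Hypotheses (hP : two_bends P) (hPa : in_index P a).

Lemma tproj_nondeg : al (tproj P a) < ar (tproj P a).
Proof. by move: P hP hPa; tproj_cases. Qed.

Lemma tproj_row_edge k :
  path_has P (HE k a) <-> al (tproj P a) <= k /\ k + 1 <= ar (tproj P a).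
Proof. by move: P hP hPa; tproj_cases; lia. Qed.

Lemma tproj_vertical_edge x y : path_has P (VE x y) ->
  exists z, ti_endpoint (tproj P a) z x /\ on_side z a y.
Proof.
  move=> hxy.
  have [[-> ?]|[-> ?]] : (x = al (tproj P a) /\ on_side (xl (tproj P a)) a y) \/
                         (x = ar (tproj P a) /\ on_side (xr (tproj P a)) a y).
    by move: P hP hPa hxy; tproj_cases; lia.
  - by exists (xl (tproj P a)); split=> //; left.
  - by exists (xr (tproj P a)); split=> //; right.
Qed.

Lemma tproj_bend_edge z g : ti_endpoint (tproj P a) z g -> z <> Tnone ->
  path_has P (bend_edge z g a).
Proof. by case=> [[-> ->]|[-> ->]]; move: P hP hPa; tproj_cases; move=> //; lia. Qed.

End TProjGeometry.

Lemma on_side_unique z w a y : on_side z a y -> on_side w a y -> z = w /\ z <> Tnone.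
Proof. by case: z; case: w => //=; lia. Qed.

Lemma tproj_intersects_common_edge P Q a :
  two_bends P -> two_bends Q -> in_index P a -> in_index Q a ->
  ti_intersects (tproj P a) (tproj Q a) -> exists e, path_has P e /\ path_has Q e.
Proof.
  move=> hP hQ hPa hQa.
  have ndP := tproj_nondeg hP hPa; have ndQ := tproj_nondeg hQ hQa.
  move/(ti_intersectsE ndP (Z.lt_le_incl _ _ ndQ)).
  case=> [[k hk]|[[z [g [hz [eP eQ]]]]|[? _]]]; last lia.
  - by exists (HE k a); split; apply/tproj_row_edge => //; lia.
  - by exists (bend_edge z g a); split; apply: tproj_bend_edge.
Qed.

Lemma common_edge_tproj_intersects P Q a :
  two_bends P -> two_bends Q -> in_index P a -> in_index Q a ->
  (forall r, in_index P r -> in_index Q r -> r = a) ->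
  (exists e, path_has P e /\ path_has Q e) -> ti_intersects (tproj P a) (tproj Q a).
Proof.
  move=> hP hQ hPa hQa rows [e [eP eQ]].
  have ndP := tproj_nondeg hP hPa; have ndQ := tproj_nondeg hQ hQa.
  apply/(ti_intersectsE ndP (Z.lt_le_incl _ _ ndQ)).
  case: e eP eQ => [x r|x y] eP eQ.
  - have era : r = a by apply: rows; exists x.
    subst r; left; exists x.
    by move/(tproj_row_edge hP hPa): eP; move/(tproj_row_edge hQ hQa): eQ; lia.
  - have [z [ezP sP]] := tproj_vertical_edge hP hPa eP.
    have [w [ewQ sQ]] := tproj_vertical_edge hQ hQa eQ.
    have [ezw hz] := on_side_unique sP sQ.
    by subst w; right; left; exists z, x.
Qed.

Theorem lemma4 (V : finType) (R : V -> path2)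
  (HR : forall v, two_bends (R v))
  (a : Z) (Y : {set V})
  (HY0 : Y != set0)
  (HYa : forall y, y \in Y -> in_index (R y) a)
  (Hclique : forall y y', y \in Y -> y' \in Y -> y <> y' ->
     ti_intersects (tproj (R y) a) (tproj (R y') a)) :
  exists t : tint,
    ti_wf t /\ ti_proper t /\
    (forall y, y \in Y -> ti_contains (tproj (R y) a) t) /\
    (forall u : V,
       ((forall r, in_index (R u) r <-> r = a) \/
        (exists c : Z, (forall r, in_index (R u) r <-> (r = a \/ r = c)) /\
           (forall y, y \in Y -> ~ in_index (R y) c))) ->
       ((forall v, v \in Y -> v <> u -> adjacent R u v) <->
        ti_intersects (tproj (R u) a) t)).
Proof.
  have nd y : y \in Y -> al (tproj (R y) a) < ar (tproj (R y) a).
    by move=> hy; apply: tproj_nondeg (HYa y hy).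
  have [t [wf [proper [contained core]]]] := ti_clique_core HY0 nd Hclique.
  exists t; do 3!split=> //; move=> u Hu.
  have hua : in_index (R u) a by case: Hu => [H|[c [H _]]]; apply/H; [|left].
  have rows y : y \in Y -> forall r, in_index (R u) r -> in_index (R y) r -> r = a.
    move=> hy r hur hyr; case: Hu => [H|[c [H hc]]]; first exact/H.
    by case/H: hur => [//|ec]; subst r; case: (hc y hy).
  have ndu := tproj_nondeg (HR u) hua.
  split=> [hadj|/(core _ ndu) hall v hv nvu].
  - apply/(core _ ndu) => y hy.
    have [->|nyu] := eqVneq y u.
      exact (ti_intersects_overlap ndu (Z.lt_le_incl _ _ ndu) ndu ndu).
    apply: common_edge_tproj_intersects (HR y) hua (HYa y hy) (rows y hy) _ => //.
    by case: (hadj y hy (elimN eqP nyu)).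
  - split; first by move=> e; apply: nvu.
    exact: tproj_intersects_common_edge (HR v) hua (HYa v hv) (hall v hv).
Qed.
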